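(* Let $\mathcal{X}\subseteq\mathbb{R}^n$ be compact and convex. The following are equivalent: (i) $\mathcal{X}$ is standard comonotone; (ii) for all $v\in\mathbb{R}^n$ and all $i,j\in[n]$ with $v_i=v_j$, there exists $x^*\in\arg\max\{v^\top x: x\in\mathcal{X}\}$ with $x^*_i=x^*_j$; (iii) for all $v\in\mathbb{R}^n$, there exists $x^*\in\arg\max\{v^\top x: x\in\mathcal{X}\}$ such that for all $i,j\in[n]$, $v_i=v_j$ implies $x^*_i=x^*_j$.
   Context: $\Pi_n$ is the set of permutations of $[n]$; for $\pi\in\Pi_n$, $\mathcal{Z}(\pi)=\{x\in\mathbb{R}^n: x_{\pi(1)}\ge\cdots\ge x_{\pi(n)}\}$. A set $\mathcal{X}\subseteq\mathbb{R}^n$ is standard comonotone if for every $\pi\in\Pi_n$ and every $v\in\mathcal{Z}(\pi)$, whenever $\max_{x\in\mathcal{X}}v^\top x$ attains its optimum, it has an optimal solution in $\mathcal{Z}(\pi)$. *)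

From HB Require Import structures.
From mathcomp Require Import all_boot all_order all_algebra all_fingroup.
From mathcomp Require Import all_classical all_reals all_analysis.
Set Implicit Arguments. Unset Strict Implicit. Unset Printing Implicit Defensive.
Import Order.TTheory GRing.Theory Num.Theory.
Import numFieldTopology.Exports numFieldNormedType.Exports.
Local Open Scope ring_scope.
Local Open Scope classical_set_scope.

Definition dotv (R : realType) (n : nat) (v x : 'rV[R]_n) : R :=
  \sum_(i < n) v ord0 i * x ord0 i.

Definition is_argmax (R : realType) (n : nat) (X : set 'rV[R]_n) (v x : 'rV[R]_n) : Prop :=
  X x /\ forall y, X y -> dotv v y <= dotv v x.

Definition Zcone (R : realType) (n : nat) (pi : 'S_n) : set 'rV[R]_n :=
  [set x | forall i j : 'I_n, (i <= j)%N -> x ord0 (pi j) <= x ord0 (pi i)].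

Definition standard_comonotone (R : realType) (n : nat) (X : set 'rV[R]_n) : Prop :=
  forall (pi : 'S_n) (v : 'rV[R]_n), Zcone pi v ->
    (exists x, is_argmax X v x) -> exists2 x, is_argmax X v x & Zcone pi x.

From HB Require Import structures.
From mathcomp Require Import all_boot all_order all_algebra all_fingroup.
From mathcomp Require Import all_classical all_reals all_analysis.
From mathcomp Require Import ring lra.
Import Order.TTheory GRing.Theory Num.Theory.
Import numFieldTopology.Exports numFieldNormedType.Exports.
Local Open Scope ring_scope.
Local Open Scope classical_set_scope.

(* (iii) => (ii) is immediate.
   (ii) => (i): under (ii), an optimum x of w has x_a >= x_b whenever w_a > w_b; tilt w
   until w_a = w_b and compare x with an optimum of the tilted objective having equal
   a- and b-coordinates.  Perturbing v in Z(pi) by eps r, with r strictly decreasing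
   along pi, therefore puts every optimum in Z(pi); as Z(pi) is closed and X compact,
   the best point of X inside Z(pi) is optimal for v itself.
   (i) => (iii): among the optima of v pick x minimising the spread, the sum of
   (x_i - x_j)^2 over the ties v_i = v_j.  Sort the indices by decreasing v, breaking
   ties by increasing x; (i) gives an optimum y in that cone, so on every tie y is
   ordered opposite to x.  The optima form a convex set, and moving from x towards y
   the spread decreases at rate at least twice its value, so it must vanish. *)

Lemma linear_coef_ge0_of_quadratic_ge0 {R : realFieldType} (a b : R) :
  (forall t, 0 < t <= 1 -> 0 <= t * a + t ^+ 2 * b) -> 0 <= a.
Proof.
move=> quad_ge0; rewrite leNgt; apply/negP => a_lt0.
have den_gt0 : 0 < `|b| - a by rewrite subr_gt0 (lt_le_trans a_lt0).
(* chosen so that [t * `|b| + a = t * a], whence [t * a + t ^+ 2 * b <= t ^+ 2 * a < 0] *)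
pose t := - a / (`|b| - a).
have t_gt0 : 0 < t by rewrite divr_gt0 ?oppr_gt0.
have t_le1 : t <= 1 by rewrite ler_pdivrMr // mul1r lerDr.
have t01 : 0 < t <= 1 by rewrite t_gt0 t_le1.
have t_den : t * (`|b| - a) = - a by rewrite divfK // gt_eqF.
have b_le : t ^+ 2 * b <= t ^+ 2 * `|b| by rewrite ler_wpM2l ?sqr_ge0 ?ler_norm.
have t2a_lt0 : t ^+ 2 * a < 0 by rewrite pmulr_rlt0 ?exprn_gt0.
have := congr1 (fun x => t * x) t_den.
have := quad_ge0 t t01.
lra.
Qed.

Lemma sum_sqr_segment_min_eq0 {R : realFieldType} {I : finType} {P : pred I}
    {a b : I -> R} :
  (forall p, P p -> a p * b p <= 0) ->
  (forall t, 0 < t <= 1 ->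
     \sum_(p | P p) a p ^+ 2 <= \sum_(p | P p) (a p + t * (b p - a p)) ^+ 2) ->
  forall p, P p -> a p = 0.
Proof.
move=> ab_le0 segment_min.
pose S := \sum_(p | P p) a p ^+ 2; pose Q := \sum_(p | P p) (b p - a p) ^+ 2.
have S_ge0 : 0 <= S by apply: sumr_ge0 => p _; exact: sqr_ge0.
suff S_le0 : 0 <= - 2 * S.
  have S0 : S = 0 by apply/eqP; rewrite eq_le S_ge0 andbT; nra.
  by move=> p Pp; apply/eqP; rewrite -sqrf_eq0; apply/eqP;
    exact: (psumr_eq0P (fun q _ => sqr_ge0 (a q)) S0).
apply: (linear_coef_ge0_of_quadratic_ge0 _ Q) => t t01.
have expand p : P p -> (a p + t * (b p - a p)) ^+ 2
    <= a p ^+ 2 + t * (- 2 * a p ^+ 2) + t ^+ 2 * (b p - a p) ^+ 2.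
  move=> Pp; have := ab_le0 p Pp; nra.
have := le_trans (segment_min t t01) (ler_sum _ expand).
rewrite !big_split /= -!mulr_sumr -/S -/Q.
lra.
Qed.

Lemma exists_perm_sorted n (le : rel 'I_n) : total le -> transitive le ->
  exists pi : 'S_n, forall k l : 'I_n, (k <= l)%N -> le (pi k) (pi l).
Proof.
move=> total_le trans_le; pose s := sort le (enum 'I_n).
have size_s : size s = n by rewrite size_sort size_enum_ord.
have s_uniq : uniq s by rewrite sort_uniq enum_uniq.
have nth_s (k l : 'I_n) : nth k s k = nth l s k.
  by apply: set_nth_default; rewrite size_s ltn_ord.
have f_inj : injective (fun k : 'I_n => nth k s k).
  move=> k l; rewrite (nth_s k l) => /eqP.
  by rewrite nth_uniq ?size_s ?ltn_ord // => /eqP /val_inj.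
exists (perm f_inj) => k l kl; rewrite !permE (nth_s k l).
have refl_le : reflexive le by move=> x; have := total_le x x; rewrite orbb.
by apply: sorted_leq_nth; rewrite ?inE ?size_s ?ltn_ord ?sort_sorted.
Qed.

Lemma exists_perm_sorted_lex {R : realDomainType} {n : nat} (f g : 'I_n -> R) :
  exists pi : 'S_n, forall k l : 'I_n, (k <= l)%N ->
    f (pi l) <= f (pi k) /\ (f (pi k) = f (pi l) -> g (pi k) <= g (pi l)).
Proof.
pose key i : R *l R := (- f i, g i).
have [pi pi_sorted] := @exists_perm_sorted n (fun i j => (key i <= key j)%O)
  (fun i j => le_total (key i) (key j)) (fun i j k => @le_trans _ _ (key i) (key j) (key k)).
exists pi => k l /pi_sorted; rewrite lexi_pair lerN2 => /andP[fkl gkl].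
by split=> // fE; move: gkl; rewrite fE lexx.
Qed.

Lemma compact_max_attained {T : topologicalType} {R : realType} {A : set T}
    {f : T -> R} :
  A !=set0 -> compact A -> continuous f -> exists2 c, A c & forall t, A t -> f t <= f c.
Proof.
move=> A0 cA cf.
have [c /set_mem Ac c_max] := compact_EVT_max A0 cA (continuous_subspaceT cf).
by exists c => // t At; apply: c_max; exact: mem_set.
Qed.

Lemma compact_min_attained {T : topologicalType} {R : realType} {A : set T}
    {f : T -> R} :
  A !=set0 -> compact A -> continuous f -> exists2 c, A c & forall t, A t -> f c <= f t.
Proof.
move=> A0 cA cf.
have [c /set_mem Ac c_min] := compact_EVT_min A0 cA (continuous_subspaceT cf).
by exists c => // t At; apply: c_min; exact: mem_set.
Qed.

Lemma continuous_sumr {T : topologicalType} {R : realType} {I : finType} {P : pred I}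
    {F : I -> T -> R} :
  (forall i, P i -> continuous (F i)) -> continuous (fun x => \sum_(i | P i) F i x).
Proof. exact: (continuous_big (op := +%R) add_continuous). Qed.

Section DotProduct.
Context {R : realType} {n : nat}.
Implicit Types (v w x y : 'rV[R]_n).

Lemma dotvDl v w x : dotv (v + w) x = dotv v x + dotv w x.
Proof. by rewrite /dotv -big_split; apply: eq_bigr => i _; rewrite mxE mulrDl. Qed.

Lemma dotvDr v w x : dotv x (v + w) = dotv x v + dotv x w.
Proof. by rewrite /dotv -big_split; apply: eq_bigr => i _; rewrite mxE mulrDr. Qed.

Lemma dotvZl (a : R) v x : dotv (a *: v) x = a * dotv v x.
Proof. by rewrite /dotv mulr_sumr; apply: eq_bigr => i _; rewrite mxE mulrA. Qed.

Lemma dotvZr (a : R) v x : dotv x (a *: v) = a * dotv x v.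
Proof. by rewrite /dotv mulr_sumr; apply: eq_bigr => i _; rewrite mxE mulrCA. Qed.

Lemma dotvNl v x : dotv (- v) x = - dotv v x.
Proof. by rewrite -scaleN1r dotvZl mulN1r. Qed.

Lemma dotv_delta (a : 'I_n) x : dotv (delta_mx 0 a) x = x ord0 a.
Proof.
rewrite /dotv (bigD1 a) //= big1 => [|i ia]; first by rewrite !mxE !eqxx mul1r addr0.
by rewrite !mxE eq_sym (negbTE ia) andbF mul0r.
Qed.

Lemma continuous_dotv v : continuous (dotv v).
Proof.
apply: continuous_sumr => i _ x.
by apply: continuousM; [exact: cst_continuous | exact: coord_continuous].
Qed.

End DotProduct.

Section Argmax.
Context {R : realType} {n : nat} {X : set 'rV[R]_n}.
Hypotheses (X0 : X !=set0) (cX : compact X).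

Lemma argmax_exists (v : 'rV[R]_n) : exists x, is_argmax X v x.
Proof. by have [x Xx x_max] := compact_max_attained X0 cX (continuous_dotv v); exists x. Qed.

Lemma argmax_min_exists (v : 'rV[R]_n) {f : 'rV[R]_n -> R} : continuous f ->
  exists2 x, is_argmax X v x & forall y, is_argmax X v y -> f x <= f y.
Proof.
move=> cf; have [x0 [Xx0 x0_max]] := argmax_exists v.
pose F := X `&` dotv v @^-1` [set c | dotv v x0 <= c].
have F0 : F !=set0 by exists x0; split => /=.
have cF : compact F.
  apply: compact_closedI => //; apply: preimage_closed; last exact: closed_ge.
  by move=> x _; exact: continuous_dotv.
have [x [Xx x_ge] x_min] := compact_min_attained F0 cF cf.
have x_max : is_argmax X v x by split => // y Xy; exact: le_trans (x0_max y Xy) x_ge.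
exists x => // y [Xy y_max]; apply: x_min; split => //; exact: y_max.
Qed.

Lemma dotv_oscillation_bounded (r : 'rV[R]_n) :
  exists K, forall x y, X x -> X y -> dotv r x - dotv r y <= K.
Proof.
have [c1 _ c1_max] := compact_max_attained X0 cX (continuous_dotv r).
have [c0 _ c0_min] := compact_min_attained X0 cX (continuous_dotv r).
by exists (dotv r c1 - dotv r c0) => x y Xx Xy; rewrite lerB ?c1_max ?c0_min.
Qed.

Lemma argmax_perturb_closed {C : set 'rV[R]_n} (v r : 'rV[R]_n) : closed C ->
  (forall eps, 0 < eps -> forall x, is_argmax X (v + eps *: r) x -> C x) ->
  exists2 x, is_argmax X v x & C x.
Proof.
move=> closedC perturb_in_C.
have [x1 x1_max] := argmax_exists (v + 1 *: r).
have XC0 : (X `&` C) !=set0 by exists x1; split; [case: x1_max | exact: perturb_in_C x1_max].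
have [z [Xz Cz] z_max] :=
  compact_max_attained XC0 (compact_closedI cX closedC) (continuous_dotv v).
exists z => //; split => // y Xy; rewrite leNgt; apply/negP => vzy.
have [K K_osc] := dotv_oscillation_bounded r.
have K_ge0 : 0 <= K by have := K_osc y y Xy Xy; rewrite subrr.
pose D := dotv v y - dotv v z; pose eps := D / (K + 1).
have D_gt0 : 0 < D by rewrite subr_gt0.
have eps_gt0 : 0 < eps by rewrite divr_gt0 // ltr_wpDl.
have epsK_lt : eps * K < D.
  by rewrite mulrAC ltr_pdivrMr ?ltr_wpDl // ltr_pM2l // ltrDl.
have [xe [Xxe xe_max]] := argmax_exists (v + eps *: r).
have vxe_le := z_max xe (conj Xxe (perturb_in_C eps eps_gt0 xe (conj Xxe xe_max))).
have := xe_max y Xy; rewrite !dotvDl !dotvZl.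
have := ler_wpM2l (ltW eps_gt0) (K_osc xe y Xxe Xy).
rewrite /D in epsK_lt; lra.
Qed.

End Argmax.

Lemma argmax_convex {R : realType} {n : nat} {X : set 'rV[R]_n}
    (v x y : 'rV[R]_n) (t : R) :
  convex_set X -> 0 <= t <= 1 -> is_argmax X v x -> is_argmax X v y ->
  is_argmax X v (t *: y + (1 - t) *: x).
Proof.
move=> cvX /andP[t_ge0 t_le1] [Xx x_max] [Xy y_max].
have Xz : X (t *: y + (1 - t) *: x).
  by apply/set_mem/(cvX y x (Itv01 t_ge0 t_le1)); exact: mem_set.
split=> // w Xw; rewrite dotvDr !dotvZr.
have vxy : dotv v y = dotv v x by apply/eqP; rewrite eq_le x_max ?y_max.
by rewrite vxy -mulrDl subrKC mul1r; exact: x_max.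
Qed.

Lemma closed_Zcone {R : realType} {n : nat} (pi : 'S_n) :
  closed (Zcone pi : set 'rV[R]_n).
Proof.
have -> : Zcone pi = \bigcap_(p in [set p : 'I_n * 'I_n | (p.1 <= p.2)%N])
    ((fun x : 'rV[R]_n => x ord0 (pi p.1) - x ord0 (pi p.2)) @^-1` [set c | 0 <= c]).
  apply/seteqP; split => x /= x_sorted.
    by move=> [i j] /= ij; rewrite subr_ge0; exact: x_sorted.
  by move=> i j ij; have := x_sorted (i, j) ij; rewrite /= subr_ge0.
apply: closed_bigI => p _; apply: preimage_closed; last exact: closed_ge.
by move=> x _; apply: continuousB; exact: coord_continuous.
Qed.

Definition tie_spread {R : realType} {n : nat} (v x : 'rV[R]_n) : R :=
  \sum_(p : 'I_n * 'I_n | v ord0 p.1 == v ord0 p.2) (x ord0 p.1 - x ord0 p.2) ^+ 2.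

Lemma continuous_tie_spread {R : realType} {n : nat} (v : 'rV[R]_n) :
  continuous (tie_spread v).
Proof.
apply: continuous_sumr => p _ x.
have gap_cont : continuous (fun y : 'rV[R]_n => y ord0 p.1 - y ord0 p.2).
  by move=> y; apply: continuousB; exact: coord_continuous.
exact: (continuousM (gap_cont x) (gap_cont x)).
Qed.

Section Comonotone.
Context {R : realType} {n : nat} (X : set 'rV[R]_n).

Definition pairwise_tie_argmax := forall (v : 'rV[R]_n) (i j : 'I_n),
  v ord0 i = v ord0 j -> exists2 x, is_argmax X v x & x ord0 i = x ord0 j.

Definition tie_preserving_argmax := forall v : 'rV[R]_n,
  exists2 x, is_argmax X v x & forall i j : 'I_n, v ord0 i = v ord0 j -> x ord0 i = x ord0 j.

Lemma tie_preserving_argmax_pairwise : tie_preserving_argmax -> pairwise_tie_argmax.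
Proof.
by move=> tiesX v i j vij; have [x x_max x_ties] := tiesX v; exists x => //; exact: x_ties.
Qed.

Lemma pairwise_tie_argmax_monotone {w x : 'rV[R]_n} {a b : 'I_n} :
  pairwise_tie_argmax -> is_argmax X w x -> w ord0 b < w ord0 a -> x ord0 b <= x ord0 a.
Proof.
move=> tiesX [Xx x_max] wba.
have ab : a != b by apply: contraTneq wba => ->; rewrite ltxx.
pose s := (w ord0 a - w ord0 b) / 2.
pose w' := w - s *: (delta_mx 0 a - delta_mx 0 b).
have dotv_w' z : dotv w' z = dotv w z - s * (z ord0 a - z ord0 b).
  by rewrite /w' dotvDl dotvNl dotvZl dotvDl dotvNl !dotv_delta.
have w'_tie : w' ord0 a = w' ord0 b.
  by rewrite /w' !mxE !eqxx (negbTE ab) eq_sym (negbTE ab) /= /s; lra.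
have [y [Xy y_max] yab] := tiesX w' a b w'_tie.
have := x_max y Xy; have := y_max x Xx.
rewrite !dotv_w' yab subrr mulr0 subr0 => xy yx.
have s_gt0 : 0 < s by rewrite /s; lra.
by rewrite -subr_ge0 -(pmulr_rge0 _ s_gt0); lra.
Qed.

Hypotheses (X0 : X !=set0) (cX : compact X).

Lemma pairwise_tie_argmax_comonotone : pairwise_tie_argmax -> standard_comonotone X.
Proof.
move=> tiesX pi v vZ _.
pose r : 'rV[R]_n := \row_k - ((pi^-1)%g k)%:R.
apply: (argmax_perturb_closed X0 cX v r (closed_Zcone pi)) => eps eps_gt0 x x_max i j ij.
have [->|nij] := eqVneq i j; first exact: lexx.
apply: (pairwise_tie_argmax_monotone tiesX x_max).
have ltij : (i < j)%N by rewrite ltn_neqAle ij andbT; apply: contra nij => /eqP /val_inj ->.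
have := vZ i j ij; have : eps * i%:R < eps * j%:R by rewrite ltr_pM2l // ltr_nat.
rewrite !mxE !permK; lra.
Qed.

Hypothesis cvX : convex_set X.

Lemma comonotone_tie_preserving_argmax : standard_comonotone X -> tie_preserving_argmax.
Proof.
move=> comonoX v.
have [xs xs_max xs_min] := argmax_min_exists X0 cX v (continuous_tie_spread v).
have [pi pi_sorted] := exists_perm_sorted_lex (fun i => v ord0 i) (fun i => xs ord0 i).
have vZ : Zcone pi v by move=> k l /pi_sorted[].
have [y y_max yZ] := comonoX pi v vZ (ex_intro _ xs xs_max).
pose gap (x : 'rV[R]_n) (p : 'I_n * 'I_n) := x ord0 p.1 - x ord0 p.2.
have gap_sorted (k l : 'I_n) : (k <= l)%N -> v ord0 (pi k) = v ord0 (pi l) ->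
    gap xs (pi k, pi l) * gap y (pi k, pi l) <= 0.
  move=> kl /(pi_sorted k l kl).2 xs_kl.
  by apply: mulr_le0_ge0; rewrite /= ?subr_le0 ?subr_ge0 // yZ.
have gap_opposite p : v ord0 p.1 == v ord0 p.2 -> gap xs p * gap y p <= 0.
  case: p => i j /eqP /=; rewrite -[i](permKV pi) -[j](permKV pi).
  have [kl|/ltnW lk] := leqP ((pi^-1)%g i) ((pi^-1)%g j); first exact: gap_sorted.
  by move=> vij; rewrite /gap -mulrNN !opprB; exact: gap_sorted.
have segment_min t : 0 < t <= 1 -> \sum_(p | v ord0 p.1 == v ord0 p.2) gap xs p ^+ 2
    <= \sum_(p | v ord0 p.1 == v ord0 p.2) (gap xs p + t * (gap y p - gap xs p)) ^+ 2.
  move=> /andP[t_gt0 t_le1].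
  have gap_segment p : gap (t *: y + (1 - t) *: xs) p = gap xs p + t * (gap y p - gap xs p).
    by rewrite /gap !mxE; ring.
  rewrite -(eq_bigr _ (fun p _ => congr1 (fun c => c ^+ 2) (gap_segment p))).
  by apply: xs_min; apply: argmax_convex => //; rewrite ltW.
exists xs => // i j vij; apply/eqP; rewrite -subr_eq0; apply/eqP.
exact: (sum_sqr_segment_min_eq0 gap_opposite segment_min (i, j) (introT eqP vij)).
Qed.

End Comonotone.

Theorem theorem3 (R : realType) (n : nat) (X : set 'rV[R]_n) :
  X !=set0 -> compact X -> convex_set X ->
  (standard_comonotone X <->
   (forall (v : 'rV[R]_n) (i j : 'I_n), v ord0 i = v ord0 j ->
      exists2 x, is_argmax X v x & x ord0 i = x ord0 j)) /\
  (standard_comonotone X <->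
   (forall v : 'rV[R]_n, exists2 x, is_argmax X v x &
      forall i j : 'I_n, v ord0 i = v ord0 j -> x ord0 i = x ord0 j)).
Proof.
move=> X0 cX cvX.
have i_iii := comonotone_tie_preserving_argmax X X0 cX cvX.
have ii_i := pairwise_tie_argmax_comonotone X X0 cX.
have iii_ii := tie_preserving_argmax_pairwise X.
split; split.
- by move=> /i_iii /iii_ii.
- exact: ii_i.
- exact: i_iii.
- by move=> /iii_ii /ii_i.
Qed.
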